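(* Let $G$ be a $2$-edge-connected graph and $e\in E(G)$. Then the inequality $x_e\le 1$ defines a facet of $\mathrm{TECSP}(G)$.
   Context: All graphs are finite, simple and undirected. An edge is a bridge if its removal increases the number of connected components. A graph is $2$-edge-connected if it is connected and has no bridges; the empty graph and a single vertex are $2$-edge-connected. $\chi^H\in\{0,1\}^{E(G)}$ is the incidence vector of $E(H)$, and $\mathrm{TECSP}(G)=\mathrm{conv}\{\chi^H : H\subseteq G\text{ is }2\text{-edge-connected}\}\subseteq\mathbb{R}^{E(G)}$. A facet is a face of dimension $\dim(\mathrm{TECSP}(G))-1$. *)

From HB Require Import structures.
From mathcomp Require Import all_boot all_order all_algebra.
Set Implicit Arguments. Unset Strict Implicit. Unset Printing Implicit Defensive.
Import Order.TTheory GRing.Theory Num.Theory.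
Local Open Scope ring_scope.

(* A finite simple graph on vertex type T : its edge set E is a set of
   2-element subsets of T ("simple": no loops, no multi-edges). *)
Definition simple_edges (T : finType) (E : {set {set T}}) : Prop :=
  forall f, f \in E -> #|f| = 2%N.

(* The edges of G, as a finite type (index set of R^{E(G)}). *)
Notation edges E := {f : {set _} | f \in E}.

Definition is_subgraph (T : finType) (E : {set {set T}}) (W : {set T})
  (F : {set {set T}}) : Prop :=
  F \subset E /\ forall f, f \in F -> f \subset W.

Definition adjg (T : finType) (W : {set T}) (F : {set {set T}}) : rel T :=
  fun x y => [&& x \in W, y \in W & [set x; y] \in F].

Definition components (T : finType) (W : {set T}) (F : {set {set T}}) :
  {set {set T}} :=
  [set [set y in W | connect (adjg W F) x y] | x in W].

Definition ncomp (T : finType) (W : {set T}) (F : {set {set T}}) : nat :=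
  #|components W F|.

Definition connected_graph (T : finType) (W : {set T}) (F : {set {set T}})
  : Prop :=
  W != set0 /\ forall x y, x \in W -> y \in W -> connect (adjg W F) x y.

Definition is_bridge (T : finType) (W : {set T}) (F : {set {set T}})
  (f : {set T}) : Prop :=
  f \in F /\ (ncomp W F < ncomp W (F :\ f))%N.

(* 2-edge-connected; the empty graph and single vertices are included. *)
Definition two_edge_connected (T : finType) (W : {set T})
  (F : {set {set T}}) : Prop :=
  W = set0 \/ (connected_graph W F /\ forall f, ~ is_bridge W F f).

Definition chi (R : nzRingType) (T : finType) (E : {set {set T}})
  (F : {set {set T}}) : {ffun edges E -> R} :=
  [ffun f => if val f \in F then 1 else 0].

Definition tec_edge_set (T : finType) (E : {set {set T}})
  (F : {set {set T}}) : Prop :=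
  exists W : {set T}, is_subgraph E W F /\ two_edge_connected W F.

Definition conv_hull (R : realFieldType) (V : lmodType R) (I : finType)
  (P : I -> Prop) (v : I -> V) : V -> Prop :=
  fun x => exists lam : I -> R,
    [/\ forall i, 0 <= lam i, forall i, ~ P i -> lam i = 0,
        \sum_i lam i = 1 & x = \sum_i lam i *: v i].

Definition TECSP (R : realFieldType) (T : finType) (E : {set {set T}})
  : {ffun edges E -> R^o} -> Prop :=
  @conv_hull R {ffun edges E -> R^o} {set {set T}} (tec_edge_set E) (@chi R T E).

Definition aff_indep (R : realFieldType) (V : lmodType R) (n : nat)
  (p : 'I_n -> V) : Prop :=
  forall c : 'I_n -> R, \sum_i c i = 0 -> \sum_i c i *: p i = 0 ->
    forall i, c i = 0.

Definition has_aff_indep (R : realFieldType) (V : lmodType R)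
  (P : V -> Prop) (n : nat) : Prop :=
  exists p : 'I_n -> V, (forall i, P (p i)) /\ aff_indep p.

(* dim P = d : the maximum number of affinely independent points of P is
   d + 1 (so the empty set has dimension -1). *)
Definition is_dim (R : realFieldType) (V : lmodType R) (P : V -> Prop)
  (d : int) : Prop :=
  exists n : nat, d = n%:Z - 1 /\ has_aff_indep P n /\ ~ has_aff_indep P n.+1.

Definition defines_facet (R : realFieldType) (V : lmodType R)
  (P : V -> Prop) (a : V -> R) (b : R) : Prop :=
  (forall x, P x -> a x <= b) /\
  exists d : int, is_dim P d /\ is_dim (fun x => P x /\ a x = b) (d - 1).

From HB Require Import structures.
From mathcomp Require Import all_boot all_order all_algebra.
From mathcomp Require Import boolp.
From mathcomp Require Import ring.
Import Order.TTheory GRing.Theory Num.Theory.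

Set Implicit Arguments.
Unset Strict Implicit.
Unset Printing Implicit Defensive.

(* Let U be the linear span of the incidence vectors of the 2-edge-connected
   subgraphs of G containing e. Every other 2-edge-connected subgraph H has its
   incidence vector in U as well: an ear A of G through e attaches to H at two
   vertices x and y, H contains two edge-disjoint x-y paths B1 and B2, and
     chi^H = chi^(H+A) - chi^(A+B1) - chi^(A+B2) + chi^(A+B1+B2)
   where the four graphs on the right are 2-edge-connected and contain e.
   So TECSP(G) lies in U, contains 0 and spans U, hence has dimension dim U,
   whereas the face x_e = 1 contains a basis of U and lies on a hyperplane
   missing 0, hence has dimension dim U - 1. *)

(** * Connectivity and bridges *)

Section Connectivity.
Variable T : finType.
Implicit Types (F A B H : {set {set T}}) (W X Z : {set T}) (a b s t u v w x y z : T).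

(* Unlike [adjg], these do not restrict the graph to a vertex set. *)
Definition edge_rel F : rel T := fun a b => [set a; b] \in F.
Definition conn F := connect (edge_rel F).

Lemma edge_rel_sym F : symmetric (edge_rel F).
Proof. by move=> a b; rewrite /edge_rel setUC. Qed.

Lemma conn_sym F x y : conn F x y = conn F y x.
Proof. exact: (sym_connect_sym (@edge_rel_sym F)). Qed.

Lemma conn_trans F x y z : conn F x y -> conn F y z -> conn F x z.
Proof. exact: connect_trans. Qed.

Lemma conn_subset F F' x y : F \subset F' -> conn F x y -> conn F' x y.
Proof.
move=> sFF'; apply: connect_sub => a b h; apply: connect1.
by rewrite /edge_rel (subsetP sFF').
Qed.

Lemma eq_set2 a b c d : [set a; b] = [set c; d] :> {set T} ->
  (a = c /\ b = d) \/ (a = d /\ b = c).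
Proof.
move=> h.
have : a \in [set c; d] by rewrite -h set21.
have : b \in [set c; d] by rewrite -h set22.
have : c \in [set a; b] by rewrite h set21.
have : d \in [set a; b] by rewrite h set22.
rewrite !in_set2.
by do 4!case/orP=> /eqP ?; subst; auto.
Qed.

Lemma conn_setD1 F f s t x y : f = [set s; t] -> conn (F :\ f) s t ->
  conn F x y -> conn (F :\ f) x y.
Proof.
move=> hf hst; apply: connect_sub x y => a b hab.
have [|neq_ab] := eqVneq [set a; b] f; last first.
  by apply: connect1; rewrite /edge_rel in_setD1 neq_ab.
rewrite {1}hf => /eq_set2 [[-> ->]|[-> ->]] //.
by rewrite -/(conn _ t s) conn_sym.
Qed.

Lemma setI0_notin F F' f : F :&: F' = set0 -> f \in F -> f \notin F'.
Proof. by move/setP/(_ f); rewrite !inE => + hf; rewrite hf /= => ->. Qed.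

Lemma setI0P F F' : reflect (forall f, f \in F -> f \notin F') (F :&: F' == set0).
Proof.
rewrite setI_eq0; apply: (iffP idP) => [/disjointFr h f /h -> // | h].
by apply/pred0P => f /=; apply/andP => [[/h/negbTE ->]].
Qed.

Definition verts A : {set T} := \bigcup_(f in A) f.

Lemma vertsP A f w : f \in A -> w \in f -> w \in verts A.
Proof. by move=> hf hw; apply/bigcupP; exists f. Qed.

Lemma verts_subset A B : A \subset B -> verts A \subset verts B.
Proof.
by move=> hAB; apply/subsetP=> w /bigcupP [f /(subsetP hAB) hf hw]; exact: vertsP hw.
Qed.

Definition bridgeless F :=
  forall f s t, f \in F -> f = [set s; t] -> conn (F :\ f) s t.

(* 2-edge-connectivity of (W, F) with W nonempty, a bridge being an edge whose
   removal disconnects its ends. *)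
Definition tec W F := [/\ W != set0, (forall f, f \in F -> f \subset W),
  (forall x y, x \in W -> y \in W -> conn F x y) & bridgeless F].

Lemma adjgE W F : (forall f, f \in F -> f \subset W) -> adjg W F =2 edge_rel F.
Proof.
move=> hW a b; rewrite /adjg /edge_rel; apply/and3P/idP => [[]//|h].
by split=> //; apply: (subsetP (hW _ h)); rewrite ?set21 ?set22.
Qed.

Lemma ncomp_connected W F : W != set0 -> (forall f, f \in F -> f \subset W) ->
  (forall x y, x \in W -> y \in W -> conn F x y) -> ncomp W F = 1%N.
Proof.
move=> hW hsub hc; rewrite /ncomp /components -(cards1 W).
have -> // : [set [set y in W | connect (adjg W F) x y] | x in W] = [set W].
apply/setP=> C; rewrite inE; apply/imsetP/eqP => [[x hx ->]|->].
  apply/setP=> y; rewrite inE (eq_connect (adjgE hsub)).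
  by case: (boolP (y \in W)) => //= hy; apply: hc.
case/set0Pn: hW => x hx; exists x => //; apply/setP=> y.
rewrite inE (eq_connect (adjgE hsub)).
by case: (boolP (y \in W)) => //= hy; have := hc x y hx hy.
Qed.

Lemma tec_two_edge_connected W F : simple_edges F -> tec W F -> two_edge_connected W F.
Proof.
move=> hsz [hW hsub hc hnb]; right; split.
  by split=> // x y hx hy; rewrite (eq_connect (adjgE hsub)); exact: hc.
move=> f [hf]; rewrite (ncomp_connected hW hsub hc).
have hsub' g : g \in F :\ f -> g \subset W by rewrite in_setD1 => /andP[_ /hsub].
have /eqP/cards2P [s [t [_ hft]]] := hsz f hf.
rewrite (ncomp_connected hW hsub') // => x y hx hy.
exact: (conn_setD1 hft (hnb f s t hf hft) (hc x y hx hy)).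
Qed.

Lemma two_edge_connected_tec W F : two_edge_connected W F -> W != set0 ->
  (forall f, f \in F -> f \subset W) -> tec W F.
Proof.
case=> [->|[[_ hc] hnb]]; first by rewrite eqxx.
move=> hW hsub.
have hc' x y : x \in W -> y \in W -> conn F x y.
  by move=> hx hy; rewrite /conn -(eq_connect (adjgE hsub)); apply: hc.
split=> // f s t hf hft.
apply/negPn/negP => hn; apply: (hnb f); split=> //.
rewrite (ncomp_connected hW hsub hc') /ncomp.
have [hsW htW] : s \in W /\ t \in W by rewrite !(subsetP (hsub _ hf)) // hft ?set21 ?set22.
have hsub' g : g \in F :\ f -> g \subset W by rewrite in_setD1 => /andP[_ /hsub].
pose comp x := [set y in W | connect (adjg W (F :\ f)) x y].
have neq_st : comp s != comp t.
  apply/negP=> /eqP hE; have : t \in comp t by rewrite inE htW connect0.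
  by rewrite -hE inE htW (eq_connect (adjgE hsub')) -/(conn _ s t) (negbTE hn).
apply: (@leq_trans #|[set comp s; comp t]|); first by rewrite cards2 neq_st.
by apply/subset_leq_card/subsetP => C /set2P [] ->; apply: imset_f.
Qed.

Lemma tecU W1 W2 F1 F2 x : tec W1 F1 -> tec W2 F2 -> x \in W1 -> x \in W2 ->
  tec (W1 :|: W2) (F1 :|: F2).
Proof.
case=> h1 s1 c1 n1 [h2 s2 c2 n2] hx1 hx2; split.
- by apply/set0Pn; exists x; rewrite inE hx1.
- move=> f; rewrite inE => /orP[] hf.
    by apply: subset_trans (s1 _ hf) (subsetUl _ _).
  by apply: subset_trans (s2 _ hf) (subsetUr _ _).
- have hx y : y \in W1 :|: W2 -> conn (F1 :|: F2) y x.
    case/setUP => hy; first by apply: conn_subset (subsetUl _ _) (c1 _ _ hy hx1).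
    exact: conn_subset (subsetUr _ _) (c2 _ _ hy hx2).
  by move=> a b ha hb; apply: conn_trans (hx a ha) _; rewrite conn_sym; exact: hx.
- move=> f s t; rewrite inE => /orP[] hf hft.
    by apply: conn_subset (n1 _ _ _ hf hft); apply/setSD/subsetUl.
  by apply: conn_subset (n2 _ _ _ hf hft); apply/setSD/subsetUr.
Qed.

(* [linked A x y]: A plus an extra edge xy is connected and bridgeless (on the
   vertices of A and x, y), stated without the extra edge: removing an edge
   of A either keeps its ends connected or separates them towards x and y. *)
Definition linked A x y := [/\ conn A x y,
  (forall f w, f \in A -> w \in f -> conn A w x) &
  (forall f s t, f \in A -> f = [set s; t] ->
    [\/ conn (A :\ f) s t, conn (A :\ f) s x && conn (A :\ f) t y |
        conn (A :\ f) s y && conn (A :\ f) t x])].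

Lemma linked_sym A x y : linked A x y -> linked A y x.
Proof.
case=> hxy hv he; split; first by rewrite conn_sym.
  by move=> f w hf hw; apply: conn_trans (hv f w hf hw) hxy.
move=> f s t hf hft.
by case: (he f s t hf hft) => ?; [constructor 1|constructor 3|constructor 2].
Qed.

Lemma linked0 x : linked set0 x x.
Proof. by split; [exact: connect0 | move=> f w | move=> f s t]; rewrite inE. Qed.

Lemma linked_edge s t : linked [set [set s; t]] s t.
Proof.
split; first by apply: connect1; rewrite /edge_rel set11.
  move=> f w; rewrite inE => /eqP -> /set2P [] ->; first exact: connect0.
  by apply: connect1; rewrite /edge_rel setUC set11.
move=> f a b; rewrite inE => /eqP -> /esym/eq_set2 [[-> ->]|[-> ->]].
  by constructor 2; rewrite /conn !connect0.
by constructor 3; rewrite /conn !connect0.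
Qed.

Lemma setD1U_subset A B f : f \notin A -> A \subset (A :|: B) :\ f.
Proof.
move=> hfA; apply/subsetP=> g hg; rewrite !inE hg andbT.
by apply: contraNneq hfA => <-.
Qed.

Lemma setD1_subsetUl A B f : A :\ f \subset (A :|: B) :\ f.
Proof. exact/setSD/subsetUl. Qed.

Lemma setD1_subsetUr A B f : B :\ f \subset (A :|: B) :\ f.
Proof. exact/setSD/subsetUr. Qed.

Lemma linked_setD1U A B x y z f s t : linked A x z -> conn B z y ->
  f \in A -> f \notin B -> f = [set s; t] ->
  [\/ conn ((A :|: B) :\ f) s t,
      conn ((A :|: B) :\ f) s x && conn ((A :|: B) :\ f) t y |
      conn ((A :|: B) :\ f) s y && conn ((A :|: B) :\ f) t x].
Proof.
case=> _ _ hea hzy hf hfB hft.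
have sA' := setD1_subsetUl A B f.
have hzy' := conn_subset (setD1U_subset A hfB) hzy; rewrite setUC in hzy'.
case: (hea f s t hf hft) => [h|/andP[h1 h2]|/andP[h1 h2]].
- by constructor 1; apply: conn_subset sA' h.
- by constructor 2; rewrite (conn_subset sA' h1) (conn_trans (conn_subset sA' h2) hzy').
- by constructor 3; rewrite (conn_subset sA' h2) (conn_trans (conn_subset sA' h1) hzy').
Qed.

Lemma linked_cat A B x y z : linked A x z -> linked B z y -> A :&: B = set0 ->
  linked (A :|: B) x y.
Proof.
move=> hA hB hd; have [ha hva _] := hA; have [hb hvb _] := hB.
have sA := subsetUl A B; have sB := subsetUr A B.
split; first exact: conn_trans (conn_subset sA ha) (conn_subset sB hb).
  move=> f w /setUP [] hf hw; first exact: conn_subset sA (hva f w hf hw).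
  apply: conn_trans (conn_subset sB (hvb f w hf hw)) _.
  by rewrite conn_sym; exact: conn_subset sA ha.
move=> f s t /setUP [] hf hft; first exact: linked_setD1U hA hb hf (setI0_notin hd hf) hft.
rewrite setIC in hd; have hzx : conn A z x by rewrite conn_sym.
have := linked_setD1U (linked_sym hB) hzx hf (setI0_notin hd hf) hft; rewrite setUC.
by case=> ?; [constructor 1|constructor 3|constructor 2].
Qed.

Lemma linked_conn A x y w : linked A x y -> w \in verts A :|: [set x; y] -> conn A w x.
Proof.
case=> hxy hv _; case/setUP => [/bigcupP [f hf hw]|/set2P [] ->].
- exact: hv hf hw.
- exact: connect0.
- by rewrite conn_sym.
Qed.

Lemma linked_attach A B x y s t : linked A x y -> linked B s t ->
  s \in verts A :|: [set x; y] -> t \in verts A :|: [set x; y] ->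
  A :&: B = set0 -> linked (A :|: B) x y.
Proof.
move=> hA [hb hvb heb] hs ht hd; have [ha hva hea] := hA.
have sA := subsetUl A B; have sB := subsetUr A B.
split; first exact: conn_subset sA ha.
  move=> f w /setUP [] hf hw; first exact: conn_subset sA (hva f w hf hw).
  exact: conn_trans (conn_subset sB (hvb f w hf hw)) (conn_subset sA (linked_conn hA hs)).
move=> f a b /setUP [] hf hft.
  have sA' := setD1_subsetUl A B f.
  case: (hea f a b hf hft) => [h|/andP[h1 h2]|/andP[h1 h2]].
  - by constructor 1; apply: conn_subset sA' h.
  - by constructor 2; rewrite (conn_subset sA' h1) (conn_subset sA' h2).
  - by constructor 3; rewrite (conn_subset sA' h1) (conn_subset sA' h2).
have sB' := setD1_subsetUr A B f.
rewrite setIC in hd.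
have sA' := setD1U_subset B (setI0_notin hd hf).
have hst : conn ((A :|: B) :\ f) s t.
  apply: conn_subset sA' _; apply: conn_trans (linked_conn hA hs) _.
  by rewrite conn_sym; exact: linked_conn hA ht.
constructor 1; case: (heb f a b hf hft) => [h|/andP[h1 h2]|/andP[h1 h2]].
- exact: conn_subset sB' h.
- apply: conn_trans (conn_subset sB' h1) (conn_trans hst _).
  by rewrite conn_sym; exact: conn_subset sB' h2.
- apply: conn_trans (conn_subset sB' h1) _; rewrite conn_sym in hst.
  by apply: conn_trans hst _; rewrite conn_sym; exact: conn_subset sB' h2.
Qed.

Lemma linked_conn_setD1 A B x y f s t : linked A x y -> conn B y x ->
  f \in A -> f \notin B -> f = [set s; t] -> conn ((A :|: B) :\ f) s t.
Proof.
move=> hA hB hf hfB hft.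
by case: (linked_setD1U hA hB hf hfB hft) => // /andP [hs ht];
  apply: conn_trans hs _; rewrite conn_sym.
Qed.

Lemma tec_linkedU A B x y : linked A x y -> linked B x y -> A :&: B = set0 ->
  tec (verts (A :|: B) :|: [set x; y]) (A :|: B).
Proof.
move=> hA hB hd; split.
- by apply/set0Pn; exists x; rewrite !inE eqxx orbT.
- by move=> f hf; apply/subsetP=> w hw; rewrite inE (vertsP hf hw).
- have hx w : w \in verts (A :|: B) :|: [set x; y] -> conn (A :|: B) w x.
    case/setUP => [/bigcupP [f /setUP [] hf hw]|hw].
    + by apply: conn_subset (subsetUl A B) (linked_conn hA _); rewrite inE (vertsP hf hw).
    + by apply: conn_subset (subsetUr A B) (linked_conn hB _); rewrite inE (vertsP hf hw).
    + by apply: conn_subset (subsetUl A B) (linked_conn hA _); rewrite inE hw orbT.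
  by move=> a b ha hb; apply: conn_trans (hx a ha) _; rewrite conn_sym; exact: hx.
- move=> f s t /setUP [] hf hft.
    by apply: linked_conn_setD1 hA _ hf (setI0_notin hd hf) hft; rewrite conn_sym; case: hB.
  rewrite setUC; rewrite setIC in hd.
  by apply: linked_conn_setD1 hB _ hf (setI0_notin hd hf) hft; rewrite conn_sym; case: hA.
Qed.

Lemma tec_linked W H x y : tec W H -> x \in W -> y \in W -> linked H x y.
Proof.
case=> _ hsub hc hnb hx hy; split; first exact: hc.
  by move=> f w hf hw; apply: hc => //; apply: (subsetP (hsub _ hf)).
by move=> f s t hf hft; constructor 1; apply: hnb.
Qed.

End Connectivity.

(** * Paths to a vertex set *)

Section Paths.
Variable T : finType.
Implicit Types (F A B H : {set {set T}}) (W X Z : {set T}) (a b s t u v w x y z : T).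

Fixpoint path_edges x (p : seq T) : {set {set T}} :=
  if p is y :: q then [set x; y] |: path_edges y q else set0.

Lemma path_edges_subset F x p : path (edge_rel F) x p -> path_edges x p \subset F.
Proof.
elim: p x => [|y p IH] x /=; first by rewrite sub0set.
by case/andP=> hxy hp; rewrite subUset sub1set -/(edge_rel F x y) hxy (IH y hp).
Qed.

Lemma mem_path_edges x p f w : f \in path_edges x p -> w \in f -> w \in x :: p.
Proof.
elim: p x => [|y p IH] x /=; first by rewrite inE.
case/setU1P => [->|hf] hw; first by move: hw; rewrite !inE => /orP[] ->; rewrite ?orbT.
by rewrite inE (IH y hf hw) orbT.
Qed.

Lemma path_edgesP x p f : f \in path_edges x p ->
  exists a b, [/\ f = [set a; b], a \in belast x p & b \in p].
Proof.
elim: p x => [|y p IH] x /=; first by rewrite inE.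
case/setU1P => [->|hf]; first by exists x, y; rewrite !inE !eqxx.
by case: (IH y hf) => a [b [-> ha hb]]; exists a, b; rewrite !inE ha hb !orbT.
Qed.

Lemma path_edges_cat x p q :
  path_edges x (p ++ q) = path_edges x p :|: path_edges (last x p) q.
Proof. by elim: p x => [|y p IH] x /=; rewrite ?set0U // IH setUA. Qed.

Lemma path_linked F x p : path (edge_rel F) x p -> uniq (x :: p) ->
  linked (path_edges x p) x (last x p).
Proof.
elim: p x => [|y p IH] x /=; first by move=> _ _; exact: linked0.
case/andP=> _ hp /andP[hx hu].
apply: linked_cat (linked_edge x y) (IH y hp hu) _.
apply/eqP/setI0P => f; rewrite inE => /eqP-> ; apply: contraNN hx => hf.
exact: mem_path_edges hf (set21 x y).
Qed.

Definition path_to F X z p := [/\ path (edge_rel F) z p, uniq (z :: p),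
  last z p \in X & forall a, a \in belast z p -> a \notin X].

Definition two_paths_to F X z := exists p1 p2,
  [/\ path_to F X z p1, path_to F X z p2 & path_edges z p1 :&: path_edges z p2 = set0].

Lemma path_to_nil F X z : z \in X -> path_to F X z [::].
Proof. by move=> hz; split. Qed.

Lemma path_to_shorten F Z v p : path (edge_rel F) v p -> uniq (v :: p) ->
  last v p \in Z -> exists q, path_to F Z v q /\ {subset q <= p}.
Proof.
elim: p v => [|y p IH] v.
  by move=> _ _ hv; exists [::]; split; first exact: path_to_nil.
have [hvZ _ _ _|hvZ] := boolP (v \in Z).
  by exists [::]; split; first exact: path_to_nil.
rewrite /= => /andP[hvy hp] /andP[hv hu] hl.
case: (IH y hp hu hl) => q [[hq1 hq2 hq3 hq4] hsub].
exists (y :: q); split; last by move=> a /[!inE] /orP[->|/hsub ->]; rewrite ?orbT.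
split => //=.
- by rewrite hvy.
- apply/andP; split => //; apply: contra hv; rewrite !inE => /orP[->//|/hsub ->].
  by rewrite orbT.
- by move=> a /[!inE] /orP[/eqP->//|]; apply: hq4.
Qed.

Lemma conn_path_to F Z v z : z \in Z -> conn F v z -> exists q, path_to F Z v q.
Proof.
move=> hz /connectP [p hp hl]; rewrite hl in hz.
case: (shortenP hp) hz => p' hp' hu _ hz.
by case: (path_to_shorten hp' hu hz) => q [hq _]; exists q.
Qed.

Lemma path_to_suffix F X z p w : path_to F X z p -> w \in p ->
  exists r, [/\ path_to F X w r, path_edges w r \subset path_edges z p
             & {subset w :: r <= p}].
Proof.
move=> hPP hw; case/splitPr: hw hPP => l r [hp hu hl hb].
exists r; split.
- move: hp hu hl hb; rewrite cat_path last_cat belast_cat /= => /and3P[_ _ hp].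
  move=> hu hl hb; split => //.
  + by move: hu => /andP[_]; rewrite cat_uniq => /and3P[_ _ ->].
  + by move=> a ha; apply: hb; rewrite mem_cat inE ha !orbT.
- by rewrite path_edges_cat /= setUA subsetUr.
- by move=> a; rewrite mem_cat => ->; rewrite orbT.
Qed.

Lemma path_to_suffix_cons F X z p w : path_to F X z p -> w \in z :: p ->
  exists r, [/\ path_to F X w r, path_edges w r \subset path_edges z p
             & {subset w :: r <= z :: p}].
Proof.
move=> hp /[!inE] /orP[/eqP->|hw]; first by exists p; split.
case: (path_to_suffix hp hw) => r [h1 h2 h3]; exists r; split => // a /h3 ha.
by rewrite inE ha orbT.
Qed.

Lemma path_to_cons F X s' s p : path_to F X s' p -> [set s'; s] \in F ->
  s \notin X -> s \notin s' :: p -> path_to F X s (s' :: p).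
Proof.
case=> hp hu hl hb hF hsX hs; split => //=.
- by rewrite hp andbT /edge_rel setUC.
- by rewrite hs.
- by move=> a /[!inE] /orP[/eqP->//|]; apply: hb.
Qed.

Lemma path_to_edges_avoid F Z s q (K : {set {set T}}) : path_to F Z s q ->
  (forall f w, f \in K -> w \in f -> w \in Z) -> path_edges s q :&: K = set0.
Proof.
case=> _ _ _ hb hK; apply/eqP/setI0P => f hf; apply/negP => hfK.
case: (path_edgesP hf) => a [b [hfe ha _]].
by move: (hb a ha); rewrite (hK f a hfK) // hfe set21.
Qed.

Lemma path_to_cat F X Z s s' q r : path_to (F :\ [set s'; s]) Z s q ->
  path_to F X (last s q) r -> {subset last s q :: r <= Z} -> X \subset Z ->
  path_to F X s (q ++ r).
Proof.
case=> hq hu hl hb [hr hur hlr hbr] hsub hXZ; split.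
- rewrite cat_path hr andbT; apply: sub_path hq => a b.
  by rewrite /edge_rel in_setD1 => /andP[].
- rewrite -cat_cons cat_uniq hu; move: (hur) => /= /andP[hw ->]; rewrite andbT.
  apply/hasPn=> a har; apply/negP; rewrite lastI mem_rcons inE => /orP[/eqP e|ha].
    by move: hw; rewrite -e har.
  by move: (hb a ha); rewrite (hsub a) // inE har orbT.
- by rewrite last_cat.
- move=> a; rewrite belast_cat mem_cat => /orP[ha|]; last exact: hbr.
  by apply: contra (hb a ha); apply: (subsetP hXZ).
Qed.

End Paths.

(** * Two edge-disjoint paths *)

Section TwoPaths.
Variable T : finType.
Implicit Types (F A B H : {set {set T}}) (W X Z : {set T}) (a b s t u v w x y z : T).

Lemma two_paths_to_cons F X s' s r p : path_to F X s r -> path_to F X s' p ->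
  [set s'; s] \in F -> s \notin X -> s \notin s' :: p ->
  path_edges s r :&: path_edges s (s' :: p) = set0 -> two_paths_to F X s.
Proof.
by move=> hr hp hF hsX hs hd; exists r, (s' :: p); split => //; exact: path_to_cons.
Qed.

Section Step.
Variables (F : {set {set T}}) (X : {set T}) (s' s : T).
Hypotheses (hF : [set s'; s] \in F) (hsX : s \notin X).

Lemma two_paths_to_tails p1 p2 : path_to F X s' p1 -> path_to F X s' p2 ->
  path_edges s' p1 :&: path_edges s' p2 = set0 ->
  s \in p1 -> s \in p2 -> two_paths_to F X s.
Proof.
move=> hp1 hp2 hd hs1 hs2.
case: (path_to_suffix hp1 hs1) => r1 [hr1 hsub1 _].
case: (path_to_suffix hp2 hs2) => r2 [hr2 hsub2 _].
exists r1, r2; split => //; apply/eqP/setI0P => f /(subsetP hsub1) h1.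
by apply: contra (setI0_notin hd h1); apply: (subsetP hsub2).
Qed.

Lemma two_paths_to_tail p1 p2 : path_to F X s' p1 -> path_to F X s' p2 ->
  path_edges s' p1 :&: path_edges s' p2 = set0 ->
  s \in p1 -> s \notin s' :: p2 -> two_paths_to F X s.
Proof.
move=> hp1 hp2 hd hs1 hs2; case: (path_to_suffix hp1 hs1) => r [hr hsub hsr].
apply: (two_paths_to_cons hr hp2 hF hsX hs2); apply/eqP/setI0P => f hf.
rewrite /= in_setU1 negb_or; apply/andP; split.
  apply: contraTneq hf => ->; apply/negP => /mem_path_edges /(_ (set22 s s')) /hsr.
  by case: hp1 => _ /andP[/negP].
exact: setI0_notin hd (subsetP hsub f hf).
Qed.

Section Detour.
Variable Z : {set T}.
Hypotheses (hXZ : X \subset Z) (hsZ : s \notin Z).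

Lemma path_to_detour_edges q p : path_to (F :\ [set s'; s]) Z s q ->
  {subset s' :: p <= Z} -> path_edges s q :&: path_edges s (s' :: p) = set0.
Proof.
move=> hq hZ.
have hK := path_to_edges_avoid hq (fun g a hg ha => hZ _ (mem_path_edges hg ha)).
apply/eqP/setI0P => f hf; rewrite /= in_setU1 negb_or (setI0_notin hK hf) andbT.
case: hq => hqp _ _ _; apply: contraTneq (subsetP (path_edges_subset hqp) f hf) => ->.
by rewrite in_setD1 setUC eqxx.
Qed.

Lemma two_paths_to_detour p1 p2 q : path_to F X s' p1 -> path_to F X s' p2 ->
  path_edges s' p1 :&: path_edges s' p2 = set0 ->
  {subset s' :: p1 <= Z} -> {subset s' :: p2 <= Z} ->
  path_to (F :\ [set s'; s]) Z s q -> last s q \in s' :: p1 -> s \notin s' :: p2 ->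
  two_paths_to F X s.
Proof.
move=> hp1 hp2 hd hZ1 hZ2 hq hw hs2.
case: (path_to_suffix_cons hp1 hw) => r [hr hsub hsr].
have hrZ : {subset last s q :: r <= Z} by move=> a /hsr /hZ1.
apply: (two_paths_to_cons (path_to_cat hq hr hrZ hXZ) hp2 hF hsX hs2).
rewrite path_edges_cat setIUl (path_to_detour_edges hq hZ2) set0U.
apply/eqP/setI0P => f hf; rewrite /= in_setU1 negb_or; apply/andP; split.
  apply: contraNneq hsZ => ef; apply: hrZ; apply: mem_path_edges hf _.
  by rewrite ef set21.
exact: setI0_notin hd (subsetP hsub f hf).
Qed.

Lemma two_paths_to_detour_to_X p q : path_to F X s' p -> {subset s' :: p <= Z} ->
  path_to (F :\ [set s'; s]) Z s q -> last s q \in X -> two_paths_to F X s.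
Proof.
move=> hp hZ hq hw.
have hqZ : {subset last s q :: [::] <= Z} by move=> a /[!inE] /eqP->; apply: (subsetP hXZ).
have := path_to_cat hq (path_to_nil F hw) hqZ hXZ; rewrite cats0 => hqX.
have hs : s \notin s' :: p by apply: contra hsZ; apply: hZ.
exact: two_paths_to_cons hqX hp hF hsX hs (path_to_detour_edges hq hZ).
Qed.

End Detour.

(* Extending two edge-disjoint paths from s' by the non-bridge s's: either s
   already lies on them, or a path from s avoiding s's first meets them or X. *)
Lemma two_paths_to_step p1 p2 : path_to F X s' p1 -> path_to F X s' p2 ->
  path_edges s' p1 :&: path_edges s' p2 = set0 ->
  s != s' -> conn (F :\ [set s'; s]) s s' -> two_paths_to F X s.
Proof.
move=> hp1 hp2 hd hss hcn.
have hd' := hd; rewrite setIC in hd'.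
have [hs1|hs1] := boolP (s \in p1); have [hs2|hs2] := boolP (s \in p2).
- exact: two_paths_to_tails hp1 hp2 hd hs1 hs2.
- by apply: two_paths_to_tail hp1 hp2 hd hs1 _; rewrite inE negb_or hss.
- by apply: two_paths_to_tail hp2 hp1 hd' hs2 _; rewrite inE negb_or hss.
have hs1' : s \notin s' :: p1 by rewrite inE negb_or hss.
have hs2' : s \notin s' :: p2 by rewrite inE negb_or hss.
pose Z := X :|: [set a | a \in s' :: p1] :|: [set a | a \in s' :: p2].
have hXZ : X \subset Z by apply/subsetP => a ha; rewrite !inE ha.
have hZ1 : {subset s' :: p1 <= Z} by move=> a ha; rewrite /Z in_setU in_setU inE ha orbT.
have hZ2 : {subset s' :: p2 <= Z} by move=> a ha; rewrite /Z in_setU inE ha orbT.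
have hsZ : s \notin Z.
  by rewrite /Z !in_setU !inE -!(in_cons s') (negbTE hsX) (negbTE hs1') (negbTE hs2').
have [q hq] := conn_path_to (hZ1 _ (mem_head s' p1)) hcn.
have [hw1|hw1] := boolP (last s q \in s' :: p1).
  exact: (@two_paths_to_detour Z hXZ hsZ p1 p2 q hp1 hp2 hd hZ1 hZ2 hq hw1 hs2').
have [hw2|hw2] := boolP (last s q \in s' :: p2).
  exact: (@two_paths_to_detour Z hXZ hsZ p2 p1 q hp2 hp1 hd' hZ2 hZ1 hq hw2 hs1').
apply: (@two_paths_to_detour_to_X Z hXZ hsZ p1 q hp1 hZ1 hq).
case: hq => _ _ /setUP [/setUP [//|]|]; rewrite in_set => hw.
  by rewrite hw in hw1.
by rewrite hw in hw2.
Qed.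

End Step.

Lemma two_paths_to_of_conn F X z x : bridgeless F -> simple_edges F ->
  x \in X -> conn F z x -> two_paths_to F X z.
Proof.
move=> hnb hsz hx /connectP [p hp hl]; subst x.
have to_X z' : z' \in X -> two_paths_to F X z'.
  by move=> hz; exists [::], [::]; split; rewrite ?setI0 //; exact: path_to_nil.
elim: p z hp hx => [|y p IH] z; first by move=> _; exact: to_X.
rewrite /= => /andP[hzy hp] hl.
have [|hzX] := boolP (z \in X); first exact: to_X.
case: (IH y hp hl) => p1 [p2 [hp1 hp2 hd]].
have hF : [set y; z] \in F by rewrite setUC.
have hzy' : z != y by move: (hsz _ hzy); rewrite cards2; case: (z != y).
apply: (two_paths_to_step hF hzX hp1 hp2 hd hzy'); rewrite conn_sym.
exact: hnb.
Qed.

End TwoPaths.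

(** * Ears *)

Section Ears.
Variable T : finType.
Implicit Types (F A B H K : {set {set T}}) (W X Z : {set T}) (a b s t u v w x y z : T).

Lemma path_to_linked F X z p : path_to F X z p ->
  [/\ path_edges z p \subset F, linked (path_edges z p) z (last z p) & last z p \in X].
Proof.
by case=> hp hu hl _; split; [exact: path_edges_subset hp | exact: path_linked hp hu |].
Qed.

Lemma tec_two_linked W H x y : tec W H -> simple_edges H -> x \in W -> y \in W ->
  exists B1 B2, [/\ B1 \subset H, B2 \subset H, B1 :&: B2 = set0,
                    linked B1 x y & linked B2 x y].
Proof.
case=> _ _ hc hnb hsz hx hy.
have [p1 [p2 [h1 h2 hd]]] := two_paths_to_of_conn hnb hsz (set11 y) (hc x y hx hy).
have [s1 J1 /set1P hl1] := path_to_linked h1.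
have [s2 J2 /set1P hl2] := path_to_linked h2.
by exists (path_edges x p1), (path_edges x p2); rewrite -{1}hl1 -hl2.
Qed.

Lemma path_head_in_verts x p : x \in verts (path_edges x p) :|: [set last x p].
Proof.
case: p => [|y p] /=; first by rewrite !inE eqxx orbT.
by rewrite inE (@vertsP _ _ [set x; y]) // !inE eqxx.
Qed.

Section InGraph.
Variable E : {set {set T}}.
Hypotheses (E_bridgeless : bridgeless E) (E_simple : simple_edges E).

(* The paths avoid the edges of H because they meet W only at their ends. *)
Lemma linked_fan W H u x0 : x0 \in W -> conn E u x0 ->
  (forall f w, f \in H -> w \in f -> w \in W) ->
  exists A1 A2 x1 x2, [/\ A1 :|: A2 \subset E, (A1 :|: A2) :&: H = set0,
    A1 :&: A2 = set0, x1 \in W & x2 \in W] /\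
    [/\ linked A1 x1 u, linked A2 u x2 & u \in verts (A1 :|: A2) :|: [set x1; x2]].
Proof.
move=> hx0 hu hW.
have [p1 [p2 [h1 h2 hd]]] := two_paths_to_of_conn E_bridgeless E_simple hx0 hu.
have [s1 J1 hx1] := path_to_linked h1; have [s2 J2 hx2] := path_to_linked h2.
exists (path_edges u p1), (path_edges u p2), (last u p1), (last u p2); split; split.
- by rewrite subUset s1 s2.
- by rewrite setIUl (path_to_edges_avoid h1 hW) (path_to_edges_avoid h2 hW) setU0.
- exact: hd.
- exact: hx1.
- exact: hx2.
- exact: linked_sym J1.
- exact: J2.
- case/setUP: (path_head_in_verts u p1) => [h|/set1P <-].
    by rewrite inE (subsetP (verts_subset (subsetUl _ (path_edges u p2))) u h).
  by rewrite in_setU set21 orbT.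
Qed.

(* B is the edge uv followed by a path from v to Z avoiding uv, which exists as
   uv is no bridge. *)
Lemma linked_handle Z K u v : [set u; v] \in E -> [set u; v] \notin K ->
  u \in Z -> (forall f w, f \in K -> w \in f -> w \in Z) ->
  exists B w, [/\ B \subset E, [set u; v] \in B, B :&: K = set0, w \in Z
                & linked B u w].
Proof.
move=> he heK hu hK.
have hvu : conn (E :\ [set u; v]) v u by rewrite conn_sym; exact: E_bridgeless.
have [q hq] := conn_path_to hu hvu.
have [sq Jq hw] := path_to_linked hq.
have heq : [set u; v] \notin path_edges v q.
  by apply/negP => /(subsetP sq); rewrite in_setD1 eqxx.
exists ([set [set u; v]] :|: path_edges v q), (last v q); split => //.
- by rewrite subUset sub1set he (subset_trans sq) ?subD1set.
- by rewrite !inE eqxx.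
- rewrite setIUl (path_to_edges_avoid hq hK) setU0.
  by apply/eqP/setI0P => f /set1P ->.
- apply: linked_cat (linked_edge u v) Jq _.
  by apply/eqP/setI0P => f /set1P ->.
Qed.

Lemma ear_exists W H e : (forall x y, conn E x y) -> tec W H -> H \subset E ->
  e \in E -> e \notin H ->
  exists A x y,
    [/\ A \subset E, A :&: H = set0, e \in A, x \in W & y \in W] /\ linked A x y.
Proof.
move=> hconn [hW hsubW _ _] hHE heE heH.
have [x0 hx0] := set0Pn _ hW.
have /eqP/cards2P [u [v [_ he]]] := E_simple heE; subst e.
have hHW f w : f \in H -> w \in f -> w \in W by move=> hf; apply/subsetP/hsubW.
have [A1 [A2 [x1 [x2 [[sE dH d12 hx1 hx2] [J1 J2 hu]]]]]] :=
  linked_fan hx0 (hconn u x0) hHW.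
have J0 := linked_cat J1 J2 d12.
have [heA|heA] := boolP ([set u; v] \in A1 :|: A2); first by exists (A1 :|: A2), x1, x2.
(* Otherwise close uv into a handle ending on the fan (then attach it) or on W
   (then it continues the first branch of the fan). *)
pose Z := verts (A1 :|: A2) :|: [set x1; x2] :|: W.
have hK f w : f \in (A1 :|: A2) :|: H -> w \in f -> w \in Z.
  by case/setUP => hf hw; rewrite !inE ?(vertsP hf hw) ?(hHW f w hf hw) ?orbT.
have heK : [set u; v] \notin (A1 :|: A2) :|: H by rewrite in_setU negb_or heA heH.
have huZ : u \in Z by rewrite /Z in_setU hu.
have [B [w [sB heB dB hw JB]]] := linked_handle heE heK huZ hK.
have [dBA dBH] : B :&: (A1 :|: A2) = set0 /\ B :&: H = set0.
  by move/eqP: dB; rewrite setIUr setU_eq0 => /andP[/eqP-> /eqP->].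
have [hwV|hwV] := boolP (w \in verts (A1 :|: A2) :|: [set x1; x2]).
  exists (A1 :|: A2 :|: B), x1, x2; split.
    by rewrite subUset sE sB setIUl dH dBH setU0 inE heB orbT.
  by apply: linked_attach J0 JB hu hwV _; rewrite setIC.
have hwW : w \in W by move: hw; rewrite inE (negbTE hwV).
exists (A1 :|: B), x1, w; split; last first.
  apply: linked_cat J1 JB _; apply/eqP; rewrite setIC.
  by move/eqP: dBA; rewrite setIUr setU_eq0 => /andP[].
rewrite subUset sB (subset_trans (subsetUl _ A2) sE) setIUl dBH setU0 inE heB orbT.
by move/eqP: dH; rewrite setIUl setU_eq0 => /andP[/eqP].
Qed.

End InGraph.
End Ears.

(** * Affine dimension *)

Local Open Scope ring_scope.

Lemma mktuple_tnth (X : Type) n (t : n.-tuple X) : [tuple tnth t i | i < n] = t.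
Proof. by apply: eq_from_tnth => i; rewrite tnth_mktuple. Qed.

Section AffineDimension.
Variables (K : realFieldType) (V : vectType K).

Lemma free_mktupleP n (q : 'I_n -> V) :
  reflect (forall c, \sum_i c i *: q i = 0 -> forall i, c i = 0) (free [tuple q i | i < n]).
Proof.
apply: (iffP freeP) => h c hc; apply: h; rewrite -[RHS]hc; apply: eq_bigr => i _.
  by rewrite nth_mktuple.
by rewrite nth_mktuple.
Qed.

Lemma free_aff_indep n (q : 'I_n -> V) : free [tuple q i | i < n] -> aff_indep q.
Proof. by move/free_mktupleP => h c _; exact: h. Qed.

Definition cons0 n (q : 'I_n -> V) (i : 'I_n.+1) : V :=
  if unlift ord0 i is Some j then q j else 0.

Lemma cons0_lift n (q : 'I_n -> V) j : cons0 q (lift ord0 j) = q j.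
Proof. by rewrite /cons0 liftK. Qed.

Lemma cons0_ord0 n (q : 'I_n -> V) : cons0 q ord0 = 0.
Proof. by rewrite /cons0 unlift_none. Qed.

Lemma aff_indep_cons0 n (q : 'I_n -> V) : free [tuple q i | i < n] -> aff_indep (cons0 q).
Proof.
move/free_mktupleP => h c hs hv.
rewrite big_ord_recl cons0_ord0 scaler0 add0r in hv.
have {}hv : \sum_(j < n) c (lift ord0 j) *: q j = 0.
  by rewrite -[RHS]hv; apply: eq_bigr => j _; rewrite cons0_lift.
have hc := h _ hv.
have hc0 : c ord0 = 0 by move: hs; rewrite big_ord_recl big1 ?addr0 // => j _; rewrite hc.
by move=> i; case: (unliftP ord0 i) => [j ->|->].
Qed.

Lemma aff_indep_level_free (phi : {scalar V}) n (q : 'I_n -> V) :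
  aff_indep q -> (forall i, phi (q i) = 1) -> free [tuple q i | i < n].
Proof.
move=> h hphi; apply/free_mktupleP => c hc; apply: (h c) (hc).
transitivity (phi (\sum_i c i *: q i)); last by rewrite hc linear0.
by rewrite linear_sum; apply: eq_bigr => i _; rewrite linearZ /= hphi mulr1.
Qed.

Lemma free_size_le_dim (X : seq V) (U : {vspace V}) : free X -> {subset X <= U} ->
  (size X <= \dim U)%N.
Proof. by move=> /eqnP <- /span_subvP; apply: dimvS. Qed.

Lemma aff_indep_le_dim n (p : 'I_n.+1 -> V) (U : {vspace V}) : aff_indep p ->
  (forall i, p i \in U) -> (n <= \dim U)%N.
Proof.
move=> hp hU; pose q j := p (lift ord0 j) - p ord0.
suff hq : free [tuple q j | j < n].
  rewrite -[n](size_tuple [tuple q j | j < n]); apply: free_size_le_dim hq _.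
  by move=> _ /tnthP [j ->]; rewrite tnth_mktuple memvB.
apply/free_mktupleP => c hc j.
pose c' i := if unlift ord0 i is Some j then c j else - \sum_j c j.
have c'_lift k : c' (lift ord0 k) = c k by rewrite /c' liftK.
have c'_ord0 : c' ord0 = - \sum_j c j by rewrite /c' unlift_none.
have h1 : \sum_i c' i = 0.
  by rewrite big_ord_recl c'_ord0 [X in _ + X](eq_bigr c) ?addNr // => k _.
have h2 : \sum_i c' i *: p i = \sum_j c j *: q j.
  rewrite big_ord_recl c'_ord0 (eq_bigr (fun k => c k *: p (lift ord0 k))); last first.
    by move=> k _; rewrite c'_lift.
  under [in RHS]eq_bigr => k _ do rewrite scalerBr.
  by rewrite sumrB addrC scaleNr scaler_suml.
by rewrite -c'_lift; apply: hp h1 _ _; rewrite h2.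
Qed.

Lemma free_spanning_subseq (S : seq V) :
  exists Y, [/\ free Y, {subset Y <= S} & size Y = \dim <<S>>].
Proof.
suff [Y [hY sYS sSY]] : exists Y, [/\ free Y, {subset Y <= S} & (<<S>> <= <<Y>>)%VS].
  exists Y; split => //; rewrite -(eqnP hY); apply/eqP.
  by rewrite eqn_leq !dimvS // sub_span.
elim: S => [|v S [Y [hf hs hsp]]]; first by exists [::]; rewrite nil_free span_nil sub0v.
have [hv|hv] := boolP (v \in <<Y>>%VS).
  exists Y; split => //; first by move=> a /hs ha; rewrite inE ha orbT.
  by rewrite span_cons subv_add hsp andbT -memvE.
exists (v :: Y); split; first by rewrite free_cons hv.
  by move=> a /[!inE] /orP[->//|/hs ->]; rewrite orbT.
by rewrite !span_cons addvS.
Qed.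

Section Span.
Variables (P : V -> Prop) (S : seq V).
Hypothesis P_span : forall x, P x -> x \in <<S>>%VS.

Lemma is_dim_span : P 0 -> (forall x, x \in S -> P x) -> is_dim P (\dim <<S>>)%:Z.
Proof.
move=> P0 SP; have [Y [hY sYS hsz]] := free_spanning_subseq S.
exists (\dim <<S>>).+1; split; first by rewrite -addn1 PoszD addrK.
split.
  rewrite -hsz; exists (cons0 (tnth (in_tuple Y))); split.
    move=> i; case: (unliftP ord0 i) => [j ->|->]; last by rewrite cons0_ord0.
    by rewrite cons0_lift; apply/SP/sYS/mem_tnth.
  by apply: aff_indep_cons0; rewrite mktuple_tnth.
by case=> p [hp /aff_indep_le_dim /(_ (fun i => P_span (hp i)))]; rewrite ltnn.
Qed.

Lemma is_dim_level_span (phi : {scalar V}) : (forall x, x \in S -> P x /\ phi x = 1) ->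
  is_dim (fun x => P x /\ phi x = 1) ((\dim <<S>>)%:Z - 1).
Proof.
move=> SP; have [Y [hY sYS hsz]] := free_spanning_subseq S.
exists (\dim <<S>>); split => //; split.
  rewrite -hsz; exists (tnth (in_tuple Y)); split.
    by move=> i; apply: SP; apply/sYS/mem_tnth.
  by apply: free_aff_indep; rewrite mktuple_tnth.
case=> q [hq /(@aff_indep_level_free phi) hfree].
suff : ((\dim <<S>>).+1 <= \dim <<S>>)%N by rewrite ltnn.
apply: (aff_indep_le_dim (p := cons0 q)).
  by apply/aff_indep_cons0/hfree => i; have [] := hq i.
move=> i; case: (unliftP ord0 i) => [j ->|->]; last by rewrite cons0_ord0 mem0v.
by rewrite cons0_lift; apply: P_span; have [] := hq j.
Qed.

Lemma defines_facet_span (phi : {scalar V}) : P 0 -> (forall x, P x -> phi x <= 1) ->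
  (forall x, x \in S -> P x /\ phi x = 1) -> defines_facet P phi 1.
Proof.
move=> P0 Pphi SP; split=> //; exists (\dim <<S>>)%:Z; split.
  by apply: is_dim_span => // x /SP [].
exact: is_dim_level_span.
Qed.

End Span.
End AffineDimension.

(** * The facet x_e <= 1 *)

Section FfunEval.
Variables (K : pzRingType) (I : finType) (i : I).

Definition ffun_eval (f : {ffun I -> K^o}) : K := f i.

Fact ffun_eval_is_linear : scalar ffun_eval.
Proof. by move=> a f g; rewrite /ffun_eval !ffunE. Qed.

HB.instance Definition _ :=
  GRing.isLinear.Build K {ffun I -> K^o} K *%R ffun_eval ffun_eval_is_linear.

End FfunEval.

Section Incidence.
Variables (R : realFieldType) (T : finType) (E : {set {set T}}).
Implicit Types (F A B : {set {set T}}).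
Local Notation V := {ffun edges E -> R^o}.

(* [chi] with codomain [R^o], so that incidence vectors form an R-vector space. *)
Definition incidence F : V := chi R E F.

Lemma tec_edge_setP W F : tec W F -> F \subset E -> simple_edges E -> tec_edge_set E F.
Proof.
move=> hF sFE hE; exists W; split; first by split => //; case: hF.
by apply: tec_two_edge_connected hF => f /(subsetP sFE) /hE.
Qed.

Lemma incidence0 : incidence set0 = 0.
Proof. by apply/ffunP=> f; rewrite !ffunE inE. Qed.

(* Each edge of A is counted 1 - 1 - 1 + 1 = 0 times, each edge of F once. *)
Lemma incidence_ear_decomposition F A (B1 B2 : {set {set T}}) : A :&: F = set0 ->
  B1 \subset F -> B2 \subset F -> B1 :&: B2 = set0 ->
  incidence F = incidence (F :|: A) - incidence (A :|: B1) - incidence (A :|: B2)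
                + incidence ((A :|: B1) :|: (A :|: B2)).
Proof.
move=> dAF sB1 sB2 d12; apply/ffunP => f; rewrite !ffunE !inE.
move: (@setI0_notin _ _ _ (val f) dAF) (@setI0_notin _ _ _ (val f) d12).
move: (subsetP sB1 (val f)) (subsetP sB2 (val f)).
case: (val f \in A); case: (val f \in F); case: (val f \in B1); case: (val f \in B2);
  move=> /= h1 h2 hA h12;
  first [ring | by move: (hA isT) | by move: (h12 isT)
               | by move: (h1 isT) | by move: (h2 isT)].
Qed.

End Incidence.

Section Facet.
Variables (R : realFieldType) (T : finType) (E : {set {set T}}).
Hypotheses (E_simple : simple_edges E) (E_tec : two_edge_connected [set: T] E).
Variable e : edges E.
Implicit Types (F A B : {set {set T}}).

Definition incidences_through_e : seq {ffun edges E -> R^o} :=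
  [seq incidence R E F | F <- enum [pred F | `[< tec_edge_set E F /\ val e \in F >]]].

Let U := <<incidences_through_e>>%VS.

Lemma tec_graph : tec [set: T] E.
Proof.
apply: two_edge_connected_tec E_tec _ (fun f _ => subsetT f).
have /eqP/cards2P [u [v [_ _]]] := E_simple (valP e).
by apply/set0Pn; exists u; rewrite inE.
Qed.

Lemma incidence_through_e_in_span W F : tec W F -> F \subset E -> val e \in F ->
  incidence R E F \in U.
Proof.
move=> hF sFE heF; apply/memv_span/map_f; rewrite mem_enum inE; apply/asboolP.
by split => //; exact: tec_edge_setP hF sFE E_simple.
Qed.

Lemma incidence_tec_in_span F : tec_edge_set E F -> incidence R E F \in U.
Proof.
case=> W [[sFE sFW] hF2].
have [heF|heF] := boolP (val e \in F).
  by apply/memv_span/map_f; rewrite mem_enum inE; apply/asboolP; split => //; exists W.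
have [->|/set0Pn [f0 hf0]] := eqVneq F set0; first by rewrite incidence0; exact: (mem0v U).
have sF : simple_edges F by move=> f /(subsetP sFE) /E_simple.
have hW : W != set0.
  have /eqP/cards2P [u [v [_ hu]]] := sF f0 hf0.
  by apply/set0Pn; exists u; apply: (subsetP (sFW _ hf0)); rewrite hu set21.
have hF := two_edge_connected_tec hF2 hW sFW.
have [E_conn E_bridgeless] : (forall x y, conn E x y) /\ bridgeless E.
  by case: tec_graph => _ _ hc hnb; split => // x y; apply: hc; rewrite inE.
have [A [x [y [[sAE dAF heA hx hy] JA]]]] :=
  ear_exists E_bridgeless E_simple E_conn hF sFE (valP e) heF.
have [B1 [B2 [sB1 sB2 d12 J1 J2]]] := tec_two_linked hF sF hx hy.
have dAB B : B \subset F -> A :&: B = set0.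
  move=> sBF; apply/eqP/setI0P => f /(setI0_notin dAF).
  by apply: contra; apply: (subsetP sBF).
have tecFA := tec_linkedU (tec_linked hF hx hy) JA (etrans (setIC F A) dAF).
have tecAB1 := tec_linkedU JA J1 (dAB B1 sB1).
have tecAB2 := tec_linkedU JA J2 (dAB B2 sB2).
have hxV B : x \in verts (A :|: B) :|: [set x; y] by rewrite !inE eqxx orbT.
have tecAB12 := tecU tecAB1 tecAB2 (hxV B1) (hxV B2).
have sAB B : B \subset F -> A :|: B \subset E.
  by move=> sBF; rewrite subUset sAE (subset_trans sBF sFE).
rewrite (incidence_ear_decomposition R E dAF sB1 sB2 d12).
apply: memvD; first apply: memvB; first apply: memvB.
- apply: incidence_through_e_in_span tecFA _ _; first by rewrite subUset sFE sAE.
  by rewrite inE heA orbT.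
- by apply: incidence_through_e_in_span tecAB1 (sAB _ sB1) _; rewrite inE heA.
- by apply: incidence_through_e_in_span tecAB2 (sAB _ sB2) _; rewrite inE heA.
- apply: incidence_through_e_in_span tecAB12 _ _; first by rewrite subUset !sAB.
  by rewrite !inE heA.
Qed.

Lemma TECSP_incidence F : tec_edge_set E F -> @TECSP R T E (incidence R E F).
Proof.
move=> hF; exists (fun G => if G == F then 1 else 0); split.
- by move=> G; case: (G == F).
- by move=> G; case: eqP => // ->.
- by rewrite (bigD1 F) //= eqxx big1 ?addr0 // => G /negbTE ->.
- rewrite (bigD1 F) //= eqxx scale1r big1 ?addr0 // => G /negbTE ->.
  by rewrite scale0r.
Qed.

Lemma TECSP0 : @TECSP R T E 0.
Proof.
rewrite -incidence0; apply: TECSP_incidence; exists set0.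
by split; [split=> [|f]; rewrite ?sub0set ?inE | left].
Qed.

Lemma TECSP_in_span x : @TECSP R T E x -> x \in U.
Proof.
case=> lam [_ lam0 _ ->]; apply: memv_suml => F _.
have [hF|hF] := asboolP (tec_edge_set E F); first by apply/memvZ/incidence_tec_in_span.
by rewrite lam0 // scale0r mem0v.
Qed.

Lemma TECSP_coord_le1 x : @TECSP R T E x -> x e <= 1.
Proof.
case=> lam [lam_ge0 _ lam1 ->]; rewrite sum_ffunE -lam1; apply: ler_sum => F _.
rewrite !ffunE; case: (_ \in _); first by rewrite [_ *: _]mulr1.
by rewrite scaler0 lam_ge0.
Qed.

Lemma incidences_through_e_face x : x \in incidences_through_e -> @TECSP R T E x /\ x e = 1.
Proof.
case/mapP => F; rewrite mem_enum inE => /asboolP [hF heF] ->.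
by split; [exact: TECSP_incidence | rewrite ffunE heF].
Qed.

End Facet.

Theorem mainTheorem6 (R : realFieldType) (T : finType) (E : {set {set T}})
  (hsimple : simple_edges E)
  (h2ec : two_edge_connected [set: T] E)
  (e : edges E) :
  defines_facet (@TECSP R T E) (fun x => x e) 1.
Proof.
apply: (@defines_facet_span _ _ _ _ (TECSP_in_span hsimple h2ec e) (ffun_eval e)).
- exact: TECSP0.
- exact: TECSP_coord_le1.
- exact: incidences_through_e_face.
Qed.
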